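(* In the setting below, suppose the graph $\mathcal G_{el}$ is connected and for every $i\in\mathcal D$ the gains satisfy $k^C_{1,i}<1$, $k^C_{2,i}<R^C_{ti}$, $k^C_{3,i}>0$. Then the origin of the linear system $\dot{\mathbf x}=\mathbf F^C\mathbf x$, $\mathbf x\in\mathbb{R}^{3N}$, is asymptotically stable.
   Context: Let $N\ge1$, $\mathcal D=\{1,\dots,N\}$, $\mathcal G_{el}$ an undirected graph on $\mathcal D$ with neighbor sets $\mathcal N_i$; for each $i$ let $C_{ti},L^C_{ti},R^C_{ti},R_{Li}>0$, and for each edge $R_{ij}=R_{ji}>0$. Let $e_1=(1,0,0)^T$, $F_i^C=\begin{bmatrix}0&\frac{1}{C_{ti}}&0\\ \frac{k^C_{1,i}-1}{L^C_{ti}}&\frac{k^C_{2,i}-R^C_{ti}}{L^C_{ti}}&\frac{k^C_{3,i}}{L^C_{ti}}\\ 0&-1&0\end{bmatrix}$. $\mathbf F^C\in\mathbb{R}^{3N\times3N}$ has $(i,i)$ block $F_i^C-\Big(\frac{1}{R_{Li}C_{ti}}+\sum_{j\in\mathcal N_i}\frac{1}{R_{ij}C_{ti}}\Big)e_1e_1^T$ and $(i,j)$ block ($j\neq i$) equal to $\frac{1}{R_{ij}C_{ti}}e_1e_1^T$ if $j\in\mathcal N_i$, $0$ otherwise. (This is the closed-loop dynamics of $N$ current-controlled converter units with PI-type state feedback, with exogenous inputs set to zero.) *)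

From Stdlib Require Import Reals Lra Lia.
Open Scope R_scope.

Fixpoint sumR (n : nat) (f : nat -> R) : R :=
  match n with
  | O => 0
  | S m => sumR m f + f m
  end.

Definition vnorm (n : nat) (v : nat -> R) : R :=
  sqrt (sumR n (fun k => v k ^ 2)).

Definition is_solution (n : nat) (A : nat -> nat -> R) (x : R -> nat -> R) : Prop :=
  forall k, (k < n)%nat -> forall t : R,
    derivable_pt_lim (fun s => x s k) t (sumR n (fun l => A k l * x t l)).

Definition asymptotically_stable (n : nat) (A : nat -> nat -> R) : Prop :=
  (forall eps, 0 < eps -> exists delta, 0 < delta /\
     forall x, is_solution n A x -> vnorm n (x 0) < delta ->
       forall t, 0 <= t -> vnorm n (x t) < eps)
  /\
  (exists delta, 0 < delta /\
     forall x, is_solution n A x -> vnorm n (x 0) < delta ->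
       forall eps, 0 < eps -> exists T, forall t, T <= t -> vnorm n (x t) < eps).

Definition simple_graph (N : nat) (adj : nat -> nat -> bool) : Prop :=
  (forall i j, adj i j = adj j i) /\
  (forall i, adj i i = false) /\
  (forall i j, adj i j = true -> (i < N)%nat /\ (j < N)%nat).

Inductive reach (adj : nat -> nat -> bool) : nat -> nat -> Prop :=
  | reach_refl : forall i, reach adj i i
  | reach_step : forall i j k, adj i j = true -> reach adj j k -> reach adj i k.

Definition connected (N : nat) (adj : nat -> nat -> bool) : Prop :=
  forall i j, (i < N)%nat -> (j < N)%nat -> reach adj i j.

Definition FCi (C L Rc k1 k2 k3 : R) (a b : nat) : R :=
  match a, b with
  | 0%nat, 1%nat => 1 / C
  | 1%nat, 0%nat => (k1 - 1) / L
  | 1%nat, 1%nat => (k2 - Rc) / L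
  | 1%nat, 2%nat => k3 / L
  | 2%nat, 1%nat => -1
  | _, _ => 0
  end.

Definition e11 (a b : nat) : R :=
  match a, b with 0%nat, 0%nat => 1 | _, _ => 0 end.

Definition FCblock (N : nat) (adj : nat -> nat -> bool)
  (Ct Lt Rt RL : nat -> R) (Rl : nat -> nat -> R) (k1 k2 k3 : nat -> R)
  (i j a b : nat) : R :=
  if Nat.eqb i j then
    FCi (Ct i) (Lt i) (Rt i) (k1 i) (k2 i) (k3 i) a b
    - (1 / (RL i * Ct i)
       + sumR N (fun l => if adj i l then 1 / (Rl i l * Ct i) else 0)) * e11 a b
  else if adj i j then (1 / (Rl i j * Ct i)) * e11 a b else 0.

(* The 3N x 3N matrix F^C; global index k = 3*i + a (unit i, 0-based, local a). *)
Definition FC (N : nat) (adj : nat -> nat -> bool)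
  (Ct Lt Rt RL : nat -> R) (Rl : nat -> nat -> R) (k1 k2 k3 : nat -> R)
  (k l : nat) : R :=
  FCblock N adj Ct Lt Rt RL Rl k1 k2 k3 (k / 3) (l / 3) (k mod 3) (l mod 3).

From Stdlib Require Import Reals Lra Lia.
Open Scope R_scope.

(* Write a := 1 - k1 > 0 and b := Rt - k2 > 0 for a unit with state (v, I, z) (capacitor voltage,
   inductor current, integrator state).  The unit carries the Lyapunov function
     W = C v^2 + (L/a) I^2 + (k3/a) z^2 - 2 e L z I,
   which is positive definite for small e > 0.  Along the unit closed on its load R_L, its derivative
   is at most -c (v^2 + I^2 + z^2): the energy part dissipates in R_L and in the inductor branch, and
   the small cross term z I supplies the missing decay of the integrator state.  The lines between
   units add to the derivative of the sum of the W's only the Laplacian form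
   - sum over edges of (v_i - v_j)^2 / R_ij <= 0.  So the total W decays exponentially and, being
   comparable to |x|^2, so does every solution. *)

Lemma sumR_ext n f g : (forall i, (i < n)%nat -> f i = g i) -> sumR n f = sumR n g.
Proof.
  induction n as [|n IH]; intros H; simpl; [reflexivity|].
  rewrite IH by (intros; apply H; lia). rewrite H by lia. reflexivity.
Qed.

Lemma sumR_le n f g : (forall i, (i < n)%nat -> f i <= g i) -> sumR n f <= sumR n g.
Proof.
  induction n as [|n IH]; intros H; simpl; [lra|].
  assert (sumR n f <= sumR n g) by (apply IH; intros; apply H; lia).
  assert (f n <= g n) by (apply H; lia). lra.
Qed.

Lemma sumR_0 n : sumR n (fun _ => 0) = 0.
Proof. induction n as [|n IH]; simpl; [|rewrite IH]; ring. Qed.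

Lemma sumR_nonneg n f : (forall i, (i < n)%nat -> 0 <= f i) -> 0 <= sumR n f.
Proof. intros H. rewrite <- (sumR_0 n). now apply sumR_le. Qed.

Lemma sumR_plus n f g : sumR n (fun i => f i + g i) = sumR n f + sumR n g.
Proof. induction n as [|n IH]; simpl; [|rewrite IH]; ring. Qed.

Lemma sumR_scal n c f : sumR n (fun i => c * f i) = c * sumR n f.
Proof. induction n as [|n IH]; simpl; [|rewrite IH]; ring. Qed.

Lemma sumR_swap n m f :
  sumR n (fun i => sumR m (fun j => f i j)) = sumR m (fun j => sumR n (fun i => f i j)).
Proof.
  induction n as [|n IH]; simpl.
  - symmetry; apply sumR_0.
  - rewrite IH, <- sumR_plus. reflexivity.
Qed.

Lemma sumR_triples n f :
  sumR (3 * n) f = sumR n (fun j => f (3 * j)%nat + f (3 * j + 1)%nat + f (3 * j + 2)%nat).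
Proof.
  induction n as [|n IH]; [reflexivity|].
  replace (3 * S n)%nat with (S (S (S (3 * n)))) by lia. cbn [sumR]. rewrite IH.
  replace (3 * n + 1)%nat with (S (3 * n)) by lia.
  replace (3 * n + 2)%nat with (S (S (3 * n))) by lia. ring.
Qed.

Lemma sumR_split_diag n i f g : (i < n)%nat ->
  sumR n (fun j => if Nat.eqb i j then f j else g j) = f i + (sumR n g - g i).
Proof.
  induction n as [|n IH]; intros Hi; [lia|]. simpl.
  destruct (Nat.eqb_spec i n) as [->|Hne].
  - rewrite (sumR_ext n _ g); [ring|].
    intros j Hj. destruct (Nat.eqb_spec n j); [lia|reflexivity].
  - rewrite IH by lia. ring.
Qed.

Lemma finite_lower_bound n g : (forall i, (i < n)%nat -> 0 < g i) ->
  exists m, 0 < m /\ forall i, (i < n)%nat -> m <= g i.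
Proof.
  induction n as [|n IH]; intros H.
  - exists 1. split; [lra | intros; lia].
  - destruct IH as [m [Hm Hle]]; [intros; apply H; lia|].
    exists (Rmin m (g n)). split.
    + apply Rmin_glb_lt; [lra | apply H; lia].
    + intros i Hi. destruct (Nat.eq_dec i n) as [->|Hne]; [apply Rmin_r|].
      eapply Rle_trans; [apply Rmin_l | apply Hle; lia].
Qed.

Lemma finite_upper_bound n g : exists M, 0 < M /\ forall i, (i < n)%nat -> g i <= M.
Proof.
  induction n as [|n IH].
  - exists 1. split; [lra | intros; lia].
  - destruct IH as [M [HM Hle]]. exists (Rmax M (g n)). split.
    + eapply Rlt_le_trans; [exact HM | apply Rmax_l].
    + intros i Hi. destruct (Nat.eq_dec i n) as [->|Hne]; [apply Rmax_r|].
      eapply Rle_trans; [apply Hle; lia | apply Rmax_l].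
Qed.

Lemma derivable_pt_lim_sumR n F dF t :
  (forall i, (i < n)%nat -> derivable_pt_lim (F i) t (dF i)) ->
  derivable_pt_lim (fun s => sumR n (fun i => F i s)) t (sumR n dF).
Proof.
  induction n as [|n IH]; intros H; simpl.
  - apply derivable_pt_lim_const.
  - apply derivable_pt_lim_plus; [apply IH; intros; apply H | apply H]; lia.
Qed.

Lemma derivable_pt_lim_exp_scal g t : derivable_pt_lim (fun s => exp (g * s)) t (g * exp (g * t)).
Proof.
  replace (g * exp (g * t)) with (exp (g * t) * (0 * t + g * 1)) by ring.
  apply (derivable_pt_lim_comp (fun s => g * s) exp).
  - apply derivable_pt_lim_mult; [apply derivable_pt_lim_const | apply derivable_pt_lim_id].
  - apply derivable_pt_lim_exp.
Qed.

(* Grönwall for [W' <= -g W]: the product [W t * exp (g t)] is nonincreasing by the mean value theorem. *)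
Lemma exp_decay_of_deriv_le (W D : R -> R) g :
  (forall t, derivable_pt_lim W t (D t)) -> (forall t, D t <= - g * W t) ->
  forall t, 0 <= t -> W t * exp (g * t) <= W 0.
Proof.
  intros HW HD t Ht. destruct (Req_dec t 0) as [->|Hne].
  { rewrite Rmult_0_r, exp_0. lra. }
  assert (Hd : forall c, 0 <= c <= t -> derivable_pt_lim (fun s => W s * exp (g * s)) c
                 ((D c + g * W c) * exp (g * c))).
  { intros c _.
    replace ((D c + g * W c) * exp (g * c)) with (D c * exp (g * c) + W c * (g * exp (g * c))) by ring.
    exact (derivable_pt_lim_mult W _ c _ _ (HW c) (derivable_pt_lim_exp_scal g c)). }
  destruct (MVT_cor2 _ _ 0 t ltac:(lra) Hd) as [c [Hc _]].
  rewrite Rmult_0_r, exp_0 in Hc.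
  assert (0 < t) by lra. pose proof (exp_pos (g * c)). specialize (HD c).
  assert ((D c + g * W c) * exp (g * c) <= 0) by nra. nra.
Qed.

Definition sqnorm (n : nat) (v : nat -> R) : R := sumR n (fun k => v k ^ 2).

Lemma sqnorm_nonneg n v : 0 <= sqnorm n v.
Proof. apply sumR_nonneg. intros. apply pow2_ge_0. Qed.

Lemma vnorm_lt_of_sqnorm_lt n v eps : 0 < eps -> sqnorm n v < eps ^ 2 -> vnorm n v < eps.
Proof.
  intros Heps H. unfold vnorm. rewrite <- (sqrt_pow2 eps) by lra.
  apply sqrt_lt_1_alt. split; [apply sqnorm_nonneg | exact H].
Qed.

Lemma sqnorm_lt_of_vnorm_lt n v d : vnorm n v < d -> sqnorm n v < d ^ 2.
Proof.
  intros H.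
  assert (Hs : sqnorm n v = vnorm n v * vnorm n v) by (symmetry; apply sqrt_sqrt, sqnorm_nonneg).
  rewrite Hs. simpl. assert (0 <= vnorm n v) by apply sqrt_pos. nra.
Qed.

Section ExponentialEstimate.
Variables (n : nat) (A : nat -> nat -> R) (K g : R).
Hypotheses (HK : 0 < K) (Hg : 0 < g).
Hypothesis Hest : forall x, is_solution n A x -> forall t, 0 <= t ->
  sqnorm n (x t) * exp (g * t) <= K * sqnorm n (x 0).

Lemma lyapunov_stable_of_exp_estimate : forall eps, 0 < eps -> exists delta, 0 < delta /\
  forall x, is_solution n A x -> vnorm n (x 0) < delta ->
  forall t, 0 <= t -> vnorm n (x t) < eps.
Proof.
  intros eps Heps. exists (eps / sqrt K). split; [apply Rdiv_lt_0_compat; [lra | now apply sqrt_lt_R0]|].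
  intros x Hx H0 t Ht. apply vnorm_lt_of_sqnorm_lt; [exact Heps|].
  apply sqnorm_lt_of_vnorm_lt in H0.
  replace ((eps / sqrt K) ^ 2) with (eps ^ 2 / K) in H0
    by (unfold Rdiv; rewrite Rpow_mult_distr, pow_inv, pow2_sqrt; lra).
  pose proof (Hest x Hx t Ht). pose proof (sqnorm_nonneg n (x t)).
  assert (1 <= exp (g * t)) by (pose proof (exp_ineq1_le (g * t)); nra).
  assert (K * sqnorm n (x 0) < K * (eps ^ 2 / K)) by (apply Rmult_lt_compat_l; lra).
  replace (K * (eps ^ 2 / K)) with (eps ^ 2) in * by (field; lra).
  nra.
Qed.

Lemma attractive_of_exp_estimate : forall x, is_solution n A x ->
  forall eps, 0 < eps -> exists T, forall t, T <= t -> vnorm n (x t) < eps.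
Proof.
  intros x Hx eps Heps.
  set (s0 := sqnorm n (x 0)). pose proof (sqnorm_nonneg n (x 0)) as Hs0. fold s0 in Hs0.
  set (m := K * (s0 + 1) / eps ^ 2).
  assert (Hm : 0 < m) by (apply Rdiv_lt_0_compat; [nra | apply pow_lt; lra]).
  exists (Rmax 0 (ln m / g)). intros t Ht.
  assert (Ht0 : 0 <= t) by (eapply Rle_trans; [apply Rmax_l | exact Ht]).
  assert (Hgt : ln m <= g * t).
  { assert (ln m / g <= t) by (eapply Rle_trans; [apply Rmax_r | exact Ht]).
    apply (Rmult_le_compat_l g) in H; [|lra].
    replace (g * (ln m / g)) with (ln m) in H by (field; lra). exact H. }
  assert (Hexp : m <= exp (g * t)).
  { rewrite <- (exp_ln m) by exact Hm.
    destruct Hgt as [Hlt | ->]; [left; now apply exp_increasing | lra]. }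
  pose proof (Hest x Hx t Ht0) as Hxt. fold s0 in Hxt. pose proof (sqnorm_nonneg n (x t)) as Hst.
  assert (Hsm : sqnorm n (x t) * m <= K * s0).
  { assert (sqnorm n (x t) * m <= sqnorm n (x t) * exp (g * t)) by (apply Rmult_le_compat_l; lra). lra. }
  assert (Hsm' : sqnorm n (x t) * (s0 + 1) <= eps ^ 2 * s0).
  { unfold m in Hsm.
    replace (sqnorm n (x t) * (K * (s0 + 1) / eps ^ 2)) with (K / eps ^ 2 * (sqnorm n (x t) * (s0 + 1))) in Hsm
      by (field; lra).
    apply (Rmult_le_compat_l (eps ^ 2 / K)) in Hsm; [|apply Rlt_le, Rdiv_lt_0_compat; [apply pow_lt|]; lra].
    replace (eps ^ 2 / K * (K / eps ^ 2 * (sqnorm n (x t) * (s0 + 1)))) with (sqnorm n (x t) * (s0 + 1)) in Hsm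
      by (field; repeat split; (lra || (apply pow_nonzero; lra))).
    replace (eps ^ 2 / K * (K * s0)) with (eps ^ 2 * s0) in Hsm by (field; lra). exact Hsm. }
  apply vnorm_lt_of_sqnorm_lt; [exact Heps|].
  assert (0 < eps ^ 2) by (apply pow_lt; lra). nra.
Qed.
End ExponentialEstimate.

Lemma asymptotically_stable_of_exp_estimate n A K g : 0 < K -> 0 < g ->
  (forall x, is_solution n A x -> forall t, 0 <= t ->
     sqnorm n (x t) * exp (g * t) <= K * sqnorm n (x 0)) ->
  asymptotically_stable n A.
Proof.
  intros HK Hg Hest. split.
  - exact (lyapunov_stable_of_exp_estimate n A K g HK Hg Hest).
  - exists 1. split; [lra|]. intros x Hx _. exact (attractive_of_exp_estimate n A K g HK Hg Hest x Hx).
Qed.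

Definition unit_eps (L RL a b k3 : R) : R :=
  Rmin (Rmin 1 (k3 / (4 * a ^ 2 * L))) (Rmin (k3 / (2 * a ^ 2 * RL)) (b * k3 / (2 * a * (L * k3 + b ^ 2)))).

Definition unit_lyap (C L RL a b k3 : R) (v I z : R) : R :=
  C * v ^ 2 + L / a * I ^ 2 + k3 / a * z ^ 2 - 2 * unit_eps L RL a b k3 * L * (z * I).

Definition unit_lyap_deriv (C L RL a b k3 : R) (v I z dv dI dz : R) : R :=
  2 * C * v * dv + 2 * (L / a) * I * dI + 2 * (k3 / a) * z * dz
  - 2 * unit_eps L RL a b k3 * L * (dz * I + z * dI).

Definition unit_lower (C L a k3 : R) : R := Rmin C (Rmin (L / (2 * a)) (k3 / (2 * a))).

Definition unit_upper (C L RL a b k3 : R) : R := C + L / a + k3 / a + unit_eps L RL a b k3 * L.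

Definition unit_dissipation (L RL a b k3 : R) : R :=
  Rmin (1 / RL) (Rmin (b / a) (unit_eps L RL a b k3 * k3)).

Definition unit_rate (C L RL a b k3 : R) : R :=
  unit_dissipation L RL a b k3 / unit_upper C L RL a b k3.

Lemma le_div_mul x p q : 0 < q -> x <= p / q -> x * q <= p.
Proof.
  intros Hq H. apply (Rmult_le_compat_r q) in H; [|lra].
  replace (p / q * q) with p in H by (field; lra). exact H.
Qed.

Lemma derivable_pt_lim_unit_lyap C L RL a b k3 fv fI fz t dv dI dz :
  derivable_pt_lim fv t dv -> derivable_pt_lim fI t dI -> derivable_pt_lim fz t dz ->
  derivable_pt_lim (fun s => unit_lyap C L RL a b k3 (fv s) (fI s) (fz s)) t
    (unit_lyap_deriv C L RL a b k3 (fv t) (fI t) (fz t) dv dI dz).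
Proof.
  intros Hv HI Hz. unfold unit_lyap. cbn [pow].
  refine (eq_ind _ (derivable_pt_lim _ t) _ _ _).
  - repeat first [ eassumption | apply derivable_pt_lim_minus | apply derivable_pt_lim_plus
                 | apply derivable_pt_lim_mult | apply derivable_pt_lim_const ].
  - unfold unit_lyap_deriv. ring.
Qed.

Lemma unit_lyap_deriv_add_dv C L RL a b k3 v I z dv w dI dz :
  unit_lyap_deriv C L RL a b k3 v I z (dv + w) dI dz
  = unit_lyap_deriv C L RL a b k3 v I z dv dI dz + 2 * C * v * w.
Proof. unfold unit_lyap_deriv. ring. Qed.

Section Unit.
Variables C L RL a b k3 : R.
Hypotheses (HC : 0 < C) (HL : 0 < L) (HRL : 0 < RL) (Ha : 0 < a) (Hb : 0 < b) (Hk3 : 0 < k3).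

Let e := unit_eps L RL a b k3.

Lemma unit_eps_spec :
  0 < e /\ e <= 1 /\ e * (4 * a ^ 2 * L) <= k3 /\ e * (2 * a ^ 2 * RL) <= k3 /\
  e * (2 * a * (L * k3 + b ^ 2)) <= b * k3.
Proof.
  assert (0 < a ^ 2) by (apply pow_lt; lra). assert (0 < b ^ 2) by (apply pow_lt; lra).
  assert (Hq : 0 < L * k3 + b ^ 2) by nra.
  unfold e, unit_eps. repeat split.
  - repeat apply Rmin_glb_lt; try lra; apply Rdiv_lt_0_compat; nra.
  - eapply Rle_trans; apply Rmin_l.
  - apply le_div_mul; [nra|]. eapply Rle_trans; [apply Rmin_l | apply Rmin_r].
  - apply le_div_mul; [nra|]. eapply Rle_trans; [apply Rmin_r | apply Rmin_l].
  - apply le_div_mul; [nra|]. eapply Rle_trans; apply Rmin_r.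
Qed.

Lemma unit_lyap_lower v I z : unit_lower C L a k3 * (v ^ 2 + I ^ 2 + z ^ 2) <= unit_lyap C L RL a b k3 v I z.
Proof.
  destruct unit_eps_spec as (He & He1 & He2 & _).
  set (p := L / (2 * a)). set (q := k3 / (2 * a)).
  assert (Hp : 0 < p) by (apply Rdiv_lt_0_compat; lra).
  assert (Hq : 0 < q) by (apply Rdiv_lt_0_compat; lra).
  assert (Hl1 : unit_lower C L a k3 <= C) by apply Rmin_l.
  assert (Hl2 : unit_lower C L a k3 <= p) by (eapply Rle_trans; [apply Rmin_r | apply Rmin_l]).
  assert (Hl3 : unit_lower C L a k3 <= q) by (eapply Rle_trans; apply Rmin_r).
  assert (Hsq : 0 <= p * (I - 2 * e * a * z) ^ 2) by (apply Rmult_le_pos; [lra | apply pow2_ge_0]).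
  assert (Hcoef : 2 * e ^ 2 * a * L <= q).
  { unfold q. apply (Rmult_le_reg_r (2 * a)); [lra|].
    replace (k3 / (2 * a) * (2 * a)) with k3 by (field; lra).
    replace (2 * e ^ 2 * a * L * (2 * a)) with (e * (4 * e * a ^ 2 * L)) by ring.
    assert (0 <= 4 * e * a ^ 2 * L) by (pose proof (pow2_ge_0 a); apply Rmult_le_pos; nra).
    assert (e * (4 * e * a ^ 2 * L) <= 1 * (4 * e * a ^ 2 * L)) by (apply Rmult_le_compat_r; lra).
    lra. }
  assert (Hexp : unit_lyap C L RL a b k3 v I z
                 = C * v ^ 2 + p * I ^ 2 + q * z ^ 2 + p * (I - 2 * e * a * z) ^ 2
                   + (q - 2 * e ^ 2 * a * L) * z ^ 2).
  { unfold unit_lyap, p, q. fold e. field. lra. }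
  rewrite Hexp. pose proof (pow2_ge_0 v). pose proof (pow2_ge_0 I). pose proof (pow2_ge_0 z). nra.
Qed.

Lemma unit_lyap_upper v I z : unit_lyap C L RL a b k3 v I z <= unit_upper C L RL a b k3 * (v ^ 2 + I ^ 2 + z ^ 2).
Proof.
  destruct unit_eps_spec as (He & _).
  assert (0 < L / a) by (apply Rdiv_lt_0_compat; lra).
  assert (0 < k3 / a) by (apply Rdiv_lt_0_compat; lra).
  assert (0 < e * L) by nra.
  assert (Hgap : unit_upper C L RL a b k3 * (v ^ 2 + I ^ 2 + z ^ 2) - unit_lyap C L RL a b k3 v I z
                 = (L / a + k3 / a + e * L) * v ^ 2 + (C + k3 / a) * I ^ 2 + (C + L / a) * z ^ 2
                   + e * L * (z + I) ^ 2).
  { unfold unit_lyap, unit_upper. fold e. ring. }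
  assert (0 <= (L / a + k3 / a + e * L) * v ^ 2) by (apply Rmult_le_pos; [lra | apply pow2_ge_0]).
  assert (0 <= (C + k3 / a) * I ^ 2) by (apply Rmult_le_pos; [lra | apply pow2_ge_0]).
  assert (0 <= (C + L / a) * z ^ 2) by (apply Rmult_le_pos; [lra | apply pow2_ge_0]).
  assert (0 <= e * L * (z + I) ^ 2) by (apply Rmult_le_pos; [lra | apply pow2_ge_0]).
  lra.
Qed.

(* Completing squares: the cross terms [2 e a z v] and [2 e b z I] are absorbed by half of [2 e k3 z^2] each. *)
Lemma unit_lyap_deriv_dissipation v I z :
  unit_lyap_deriv C L RL a b k3 v I z ((- v / RL + I) / C) ((- (a * v) - b * I + k3 * z) / L) (- I)
  <= - unit_dissipation L RL a b k3 * (v ^ 2 + I ^ 2 + z ^ 2).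
Proof.
  destruct unit_eps_spec as (He & _ & _ & He3 & He4).
  set (d1 := 1 / RL - 2 * e * a ^ 2 / k3).
  set (d2 := b / a - 2 * e * L - 2 * e * b ^ 2 / k3).
  set (s1 := e * k3 / 2 * (z - 2 * a * v / k3) ^ 2).
  set (s2 := e * k3 / 2 * (z - 2 * b * I / k3) ^ 2).
  assert (Hd1 : 0 <= d1).
  { unfold d1. apply (Rmult_le_reg_r (RL * k3)); [nra|].
    replace ((1 / RL - 2 * e * a ^ 2 / k3) * (RL * k3)) with (k3 - 2 * e * a ^ 2 * RL) by (field; lra). lra. }
  assert (Hd2 : 0 <= d2).
  { unfold d2. apply (Rmult_le_reg_r (a * k3)); [nra|].
    replace ((b / a - 2 * e * L - 2 * e * b ^ 2 / k3) * (a * k3)) with (b * k3 - 2 * e * a * (L * k3 + b ^ 2))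
      by (field; lra). lra. }
  assert (Hs1 : 0 <= s1) by (apply Rmult_le_pos; [nra | apply pow2_ge_0]).
  assert (Hs2 : 0 <= s2) by (apply Rmult_le_pos; [nra | apply pow2_ge_0]).
  assert (HQ : unit_lyap_deriv C L RL a b k3 v I z ((- v / RL + I) / C) ((- (a * v) - b * I + k3 * z) / L) (- I)
               = - s1 - s2 - (1 / RL + d1) * v ^ 2 - (b / a + d2) * I ^ 2 - e * k3 * z ^ 2).
  { unfold unit_lyap_deriv, s1, s2, d1, d2. fold e. field. lra. }
  set (c := unit_dissipation L RL a b k3).
  assert (Hc1 : c <= 1 / RL) by apply Rmin_l.
  assert (Hc2 : c <= b / a) by (eapply Rle_trans; [apply Rmin_r | apply Rmin_l]).
  assert (Hc3 : c <= e * k3) by (eapply Rle_trans; apply Rmin_r).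
  pose proof (pow2_ge_0 v). pose proof (pow2_ge_0 I). pose proof (pow2_ge_0 z).
  rewrite HQ. nra.
Qed.

Lemma unit_lower_pos : 0 < unit_lower C L a k3.
Proof. repeat apply Rmin_glb_lt; try apply Rdiv_lt_0_compat; lra. Qed.

Lemma unit_upper_pos : 0 < unit_upper C L RL a b k3.
Proof.
  destruct unit_eps_spec as (He & _).
  assert (0 < L / a) by (apply Rdiv_lt_0_compat; lra).
  assert (0 < k3 / a) by (apply Rdiv_lt_0_compat; lra).
  unfold unit_upper. fold e. nra.
Qed.

Lemma unit_rate_pos : 0 < unit_rate C L RL a b k3.
Proof.
  destruct unit_eps_spec as (He & _).
  apply Rdiv_lt_0_compat; [|exact unit_upper_pos].
  unfold unit_dissipation. fold e. repeat apply Rmin_glb_lt; try apply Rdiv_lt_0_compat; nra.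
Qed.

Lemma unit_lyap_deriv_le_rate v I z :
  unit_lyap_deriv C L RL a b k3 v I z ((- v / RL + I) / C) ((- (a * v) - b * I + k3 * z) / L) (- I)
  <= - unit_rate C L RL a b k3 * unit_lyap C L RL a b k3 v I z.
Proof.
  pose proof unit_rate_pos as Hr.
  pose proof (unit_lyap_deriv_dissipation v I z) as Hd.
  pose proof (unit_lyap_upper v I z) as Hu.
  assert (Hc : unit_dissipation L RL a b k3 = unit_rate C L RL a b k3 * unit_upper C L RL a b k3).
  { unfold unit_rate. field. pose proof unit_upper_pos. lra. }
  rewrite Hc in Hd. nra.
Qed.
End Unit.

(* Symmetrising, twice the form equals [- sum_i sum_j G i j (w i - w j)^2]. *)
Lemma laplacian_form_nonpos n (G : nat -> nat -> R) (w : nat -> R) :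
  (forall i j, G i j = G j i) -> (forall i j, 0 <= G i j) ->
  sumR n (fun i => w i * sumR n (fun j => G i j * (w j - w i))) <= 0.
Proof.
  intros Hsym Hpos.
  set (S := sumR n (fun i => w i * sumR n (fun j => G i j * (w j - w i)))).
  assert (Hrow : S = sumR n (fun i => sumR n (fun j => G i j * w i * (w j - w i)))).
  { apply sumR_ext. intros i _. rewrite <- sumR_scal. apply sumR_ext. intros j _. ring. }
  assert (Hsq : S + S = sumR n (fun i => sumR n (fun j => - (G i j * (w i - w j) ^ 2)))).
  { assert (Hcol : S = sumR n (fun i => sumR n (fun j => G j i * w j * (w i - w j))))
      by (rewrite Hrow; apply sumR_swap).
    rewrite Hrow at 1. rewrite Hcol, <- sumR_plus. apply sumR_ext. intros i _.
    rewrite <- sumR_plus. apply sumR_ext. intros j _. rewrite (Hsym j i). ring. }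
  assert (sumR n (fun i => sumR n (fun j => - (G i j * (w i - w j) ^ 2))) <= 0).
  { rewrite <- (sumR_0 n). apply sumR_le. intros i _. rewrite <- (sumR_0 n). apply sumR_le. intros j _.
    pose proof (Hpos i j). pose proof (pow2_ge_0 (w i - w j)). nra. }
  lra.
Qed.

Lemma divmod3 j a : (a < 3)%nat -> ((3 * j + a) / 3 = j /\ (3 * j + a) mod 3 = a)%nat.
Proof.
  intros H. split; symmetry; [apply (Nat.div_unique _ _ _ a) | apply (Nat.mod_unique _ _ j)]; lia.
Qed.

Section Network.
Variables (N : nat) (adj : nat -> nat -> bool) (Ct Lt Rt RL : nat -> R) (Rl : nat -> nat -> R)
  (k1 k2 k3 : nat -> R).

Definition FCmul (xs : nat -> R) (k : nat) : R :=
  sumR (3 * N) (fun l => FC N adj Ct Lt Rt RL Rl k1 k2 k3 k l * xs l).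

Definition conductance (i j : nat) : R := if adj i j then / Rl i j else 0.

Definition coupling_current (xs : nat -> R) (i : nat) : R :=
  sumR N (fun j => conductance i j * (xs (3 * j)%nat - xs (3 * i)%nat)).

Lemma FCmul_blocks xs i a : (a < 3)%nat ->
  FCmul xs (3 * i + a) = sumR N (fun j =>
      FCblock N adj Ct Lt Rt RL Rl k1 k2 k3 i j a 0 * xs (3 * j)%nat
    + FCblock N adj Ct Lt Rt RL Rl k1 k2 k3 i j a 1 * xs (3 * j + 1)%nat
    + FCblock N adj Ct Lt Rt RL Rl k1 k2 k3 i j a 2 * xs (3 * j + 2)%nat).
Proof.
  intros Ha. unfold FCmul. rewrite sumR_triples. apply sumR_ext. intros j _.
  unfold FC. destruct (divmod3 i a Ha) as [-> ->].
  replace (3 * j)%nat with (3 * j + 0)%nat at 1 2 by lia.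
  destruct (divmod3 j 0) as [-> ->]; [lia|].
  destruct (divmod3 j 1) as [-> ->]; [lia|].
  destruct (divmod3 j 2) as [-> ->]; [lia|].
  reflexivity.
Qed.

Hypothesis Hirr : forall i, adj i i = false.
Hypothesis HC : forall i, (i < N)%nat -> 0 < Ct i /\ 0 < Lt i /\ 0 < Rt i /\ 0 < RL i.
Hypothesis HRl : forall i j, adj i j = true -> 0 < Rl i j /\ Rl i j = Rl j i.
Hypothesis Hsym : forall i j, adj i j = adj j i.
Hypothesis Hk : forall i, (i < N)%nat -> k1 i < 1 /\ k2 i < Rt i /\ 0 < k3 i.

Lemma FCmul_voltage xs i : (i < N)%nat ->
  FCmul xs (3 * i) = (- xs (3 * i)%nat / RL i + xs (3 * i + 1)%nat + coupling_current xs i) / Ct i.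
Proof.
  intros Hi. replace (3 * i)%nat with (3 * i + 0)%nat at 1 by lia.
  rewrite FCmul_blocks by lia. unfold FCblock. cbn [FCi e11].
  assert (Hdeg : sumR N (fun l => if adj i l then 1 / (Rl i l * Ct i) else 0)
                 = / Ct i * sumR N (conductance i)).
  { rewrite <- sumR_scal. apply sumR_ext. intros l _. unfold conductance.
    destruct (adj i l); [unfold Rdiv; rewrite Rmult_1_l, Rinv_mult |]; ring. }
  rewrite Hdeg.
  rewrite (sumR_ext _ _ (fun j => if Nat.eqb i j
      then - (1 / (RL i * Ct i) + / Ct i * sumR N (conductance i)) * xs (3 * j)%nat
           + 1 / Ct i * xs (3 * j + 1)%nat
      else / Ct i * (conductance i j * xs (3 * j)%nat))).
  2: { intros j _. destruct (Nat.eqb i j); [ring|]. unfold conductance.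
       destruct (adj i j); [unfold Rdiv; rewrite Rmult_1_l, Rinv_mult |]; ring. }
  rewrite sumR_split_diag, sumR_scal by exact Hi.
  assert (Hcc : coupling_current xs i
                = sumR N (fun j => conductance i j * xs (3 * j)%nat) - sumR N (conductance i) * xs (3 * i)%nat).
  { unfold coupling_current.
    rewrite (sumR_ext _ _ (fun j => conductance i j * xs (3 * j)%nat + (- xs (3 * i)%nat) * conductance i j))
      by (intros; ring).
    rewrite sumR_plus, sumR_scal. ring. }
  assert (Hii : conductance i i = 0) by (unfold conductance; now rewrite Hirr).
  rewrite Hcc, Hii.
  destruct (HC i Hi) as (HCi & _ & _ & HRLi). unfold Rdiv. rewrite Rinv_mult. field. lra.
Qed.

Lemma FCmul_current xs i : (i < N)%nat ->
  FCmul xs (3 * i + 1) = (- ((1 - k1 i) * xs (3 * i)%nat) - (Rt i - k2 i) * xs (3 * i + 1)%nat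
                          + k3 i * xs (3 * i + 2)%nat) / Lt i.
Proof.
  intros Hi. rewrite FCmul_blocks by lia. unfold FCblock. cbn [FCi e11].
  rewrite (sumR_ext _ _ (fun j => if Nat.eqb i j
      then (k1 i - 1) / Lt i * xs (3 * j)%nat + (k2 i - Rt i) / Lt i * xs (3 * j + 1)%nat
           + k3 i / Lt i * xs (3 * j + 2)%nat
      else 0)).
  2: { intros j _. destruct (Nat.eqb i j); [|destruct (adj i j)]; ring. }
  rewrite sumR_split_diag, sumR_0 by exact Hi.
  destruct (HC i Hi) as (_ & HLi & _). field. lra.
Qed.

Lemma FCmul_integrator xs i : (i < N)%nat -> FCmul xs (3 * i + 2) = - xs (3 * i + 1)%nat.
Proof.
  intros Hi. rewrite FCmul_blocks by lia. unfold FCblock. cbn [FCi e11].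
  rewrite (sumR_ext _ _ (fun j => if Nat.eqb i j then - xs (3 * j + 1)%nat else 0)).
  2: { intros j _. destruct (Nat.eqb i j); [|destruct (adj i j)]; ring. }
  rewrite sumR_split_diag, sumR_0 by exact Hi. ring.
Qed.

Lemma conductance_sym i j : conductance i j = conductance j i.
Proof.
  unfold conductance. rewrite (Hsym j i). destruct (adj i j) eqn:E; [|reflexivity].
  now rewrite (proj2 (HRl i j E)).
Qed.

Lemma conductance_nonneg i j : 0 <= conductance i j.
Proof.
  unfold conductance. destruct (adj i j) eqn:E; [|lra].
  apply Rlt_le, Rinv_0_lt_compat, (HRl i j E).
Qed.

Definition node_lyap (xs : nat -> R) (i : nat) : R :=
  unit_lyap (Ct i) (Lt i) (RL i) (1 - k1 i) (Rt i - k2 i) (k3 i)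
    (xs (3 * i)%nat) (xs (3 * i + 1)%nat) (xs (3 * i + 2)%nat).

Definition net_lyap (xs : nat -> R) : R := sumR N (node_lyap xs).

Definition net_lyap_deriv (xs : nat -> R) : R :=
  sumR N (fun i => unit_lyap_deriv (Ct i) (Lt i) (RL i) (1 - k1 i) (Rt i - k2 i) (k3 i)
    (xs (3 * i)%nat) (xs (3 * i + 1)%nat) (xs (3 * i + 2)%nat)
    (FCmul xs (3 * i)) (FCmul xs (3 * i + 1)) (FCmul xs (3 * i + 2))).

Lemma derivable_pt_lim_net_lyap x : is_solution (3 * N) (FC N adj Ct Lt Rt RL Rl k1 k2 k3) x ->
  forall t, derivable_pt_lim (fun s => net_lyap (x s)) t (net_lyap_deriv (x t)).
Proof.
  intros Hx t. apply derivable_pt_lim_sumR. intros i Hi.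
  apply derivable_pt_lim_unit_lyap; apply Hx; lia.
Qed.

Lemma node_params_pos i : (i < N)%nat ->
  0 < Ct i /\ 0 < Lt i /\ 0 < RL i /\ 0 < 1 - k1 i /\ 0 < Rt i - k2 i /\ 0 < k3 i.
Proof. intros Hi. destruct (HC i Hi) as (? & ? & ? & ?), (Hk i Hi) as (? & ? & ?). repeat split; lra. Qed.

Lemma node_lyap_lower xs i : (i < N)%nat ->
  unit_lower (Ct i) (Lt i) (1 - k1 i) (k3 i) * (xs (3 * i)%nat ^ 2 + xs (3 * i + 1)%nat ^ 2 + xs (3 * i + 2)%nat ^ 2)
  <= node_lyap xs i.
Proof. intros Hi. destruct (node_params_pos i Hi) as (? & ? & ? & ? & ? & ?). now apply unit_lyap_lower. Qed.

Lemma node_lyap_upper xs i : (i < N)%nat ->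
  node_lyap xs i <= unit_upper (Ct i) (Lt i) (RL i) (1 - k1 i) (Rt i - k2 i) (k3 i)
                    * (xs (3 * i)%nat ^ 2 + xs (3 * i + 1)%nat ^ 2 + xs (3 * i + 2)%nat ^ 2).
Proof. intros Hi. destruct (node_params_pos i Hi) as (? & ? & ? & ? & ? & ?). now apply unit_lyap_upper. Qed.

Lemma node_lyap_nonneg xs i : (i < N)%nat -> 0 <= node_lyap xs i.
Proof.
  intros Hi. eapply Rle_trans; [|exact (node_lyap_lower xs i Hi)].
  destruct (node_params_pos i Hi) as (? & ? & ? & ? & ? & ?).
  apply Rmult_le_pos; [apply Rlt_le; now apply unit_lower_pos|].
  pose proof (pow2_ge_0 (xs (3 * i)%nat)). pose proof (pow2_ge_0 (xs (3 * i + 1)%nat)).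
  pose proof (pow2_ge_0 (xs (3 * i + 2)%nat)). lra.
Qed.

Lemma net_lyap_lower al : (forall i, (i < N)%nat -> al <= unit_lower (Ct i) (Lt i) (1 - k1 i) (k3 i)) ->
  forall xs, al * sqnorm (3 * N) xs <= net_lyap xs.
Proof.
  intros Hal xs. unfold sqnorm, net_lyap. rewrite sumR_triples, <- sumR_scal. apply sumR_le. intros i Hi.
  eapply Rle_trans; [|exact (node_lyap_lower xs i Hi)].
  apply Rmult_le_compat_r; [|exact (Hal i Hi)].
  pose proof (pow2_ge_0 (xs (3 * i)%nat)). pose proof (pow2_ge_0 (xs (3 * i + 1)%nat)).
  pose proof (pow2_ge_0 (xs (3 * i + 2)%nat)). lra.
Qed.

Lemma net_lyap_upper be :
  (forall i, (i < N)%nat -> unit_upper (Ct i) (Lt i) (RL i) (1 - k1 i) (Rt i - k2 i) (k3 i) <= be) ->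
  forall xs, net_lyap xs <= be * sqnorm (3 * N) xs.
Proof.
  intros Hbe xs. unfold sqnorm, net_lyap. rewrite sumR_triples, <- sumR_scal. apply sumR_le. intros i Hi.
  eapply Rle_trans; [exact (node_lyap_upper xs i Hi)|].
  apply Rmult_le_compat_r; [|exact (Hbe i Hi)].
  pose proof (pow2_ge_0 (xs (3 * i)%nat)). pose proof (pow2_ge_0 (xs (3 * i + 1)%nat)).
  pose proof (pow2_ge_0 (xs (3 * i + 2)%nat)). lra.
Qed.

(* The coupling currents only enter the voltage equations, where they contribute the Laplacian form. *)
Lemma net_lyap_deriv_le g :
  (forall i, (i < N)%nat -> g <= unit_rate (Ct i) (Lt i) (RL i) (1 - k1 i) (Rt i - k2 i) (k3 i)) ->
  forall xs, net_lyap_deriv xs <= - g * net_lyap xs.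
Proof.
  intros Hg xs.
  set (v := fun i => xs (3 * i)%nat). set (I := fun i => xs (3 * i + 1)%nat). set (z := fun i => xs (3 * i + 2)%nat).
  set (Dunit := fun i => unit_lyap_deriv (Ct i) (Lt i) (RL i) (1 - k1 i) (Rt i - k2 i) (k3 i) (v i) (I i) (z i)
         ((- v i / RL i + I i) / Ct i) ((- ((1 - k1 i) * v i) - (Rt i - k2 i) * I i + k3 i * z i) / Lt i) (- I i)).
  assert (Hsplit : net_lyap_deriv xs = sumR N Dunit + 2 * sumR N (fun i => v i * coupling_current xs i)).
  { unfold net_lyap_deriv. rewrite <- sumR_scal, <- sumR_plus. apply sumR_ext. intros i Hi.
    rewrite FCmul_voltage, FCmul_current, FCmul_integrator by exact Hi. fold (v i) (I i) (z i).
    destruct (node_params_pos i Hi) as (HCi & _ & HRLi & _).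
    replace ((- v i / RL i + I i + coupling_current xs i) / Ct i)
      with ((- v i / RL i + I i) / Ct i + coupling_current xs i / Ct i) by (field; lra).
    rewrite unit_lyap_deriv_add_dv. unfold Dunit. field. lra. }
  assert (Hlap : sumR N (fun i => v i * coupling_current xs i) <= 0)
    by exact (laplacian_form_nonpos N conductance v conductance_sym conductance_nonneg).
  assert (Hunit : sumR N Dunit <= - g * net_lyap xs).
  { unfold net_lyap. rewrite <- sumR_scal. apply sumR_le. intros i Hi.
    destruct (node_params_pos i Hi) as (? & ? & ? & ? & ? & ?).
    assert (Hd : Dunit i <= - unit_rate (Ct i) (Lt i) (RL i) (1 - k1 i) (Rt i - k2 i) (k3 i) * node_lyap xs i)
      by (now apply unit_lyap_deriv_le_rate).
    pose proof (node_lyap_nonneg xs i Hi). specialize (Hg i Hi). nra. }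
  lra.
Qed.

Lemma FC_exp_estimate : exists K g, 0 < K /\ 0 < g /\
  forall x, is_solution (3 * N) (FC N adj Ct Lt Rt RL Rl k1 k2 k3) x -> forall t, 0 <= t ->
    sqnorm (3 * N) (x t) * exp (g * t) <= K * sqnorm (3 * N) (x 0).
Proof.
  destruct (finite_lower_bound N (fun i => unit_lower (Ct i) (Lt i) (1 - k1 i) (k3 i))) as [al [Hal Hal_le]].
  { intros i Hi. destruct (node_params_pos i Hi) as (? & ? & ? & ? & ? & ?). now apply unit_lower_pos. }
  destruct (finite_upper_bound N (fun i => unit_upper (Ct i) (Lt i) (RL i) (1 - k1 i) (Rt i - k2 i) (k3 i)))
    as [be [Hbe Hbe_ge]].
  destruct (finite_lower_bound N (fun i => unit_rate (Ct i) (Lt i) (RL i) (1 - k1 i) (Rt i - k2 i) (k3 i)))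
    as [g [Hg Hg_le]].
  { intros i Hi. destruct (node_params_pos i Hi) as (? & ? & ? & ? & ? & ?). now apply unit_rate_pos. }
  exists (be / al), g. split; [now apply Rdiv_lt_0_compat|]. split; [exact Hg|].
  intros x Hx t Ht.
  pose proof (exp_decay_of_deriv_le (fun s => net_lyap (x s)) (fun s => net_lyap_deriv (x s)) g
                (derivable_pt_lim_net_lyap x Hx) (fun s => net_lyap_deriv_le g Hg_le (x s)) t Ht).
  pose proof (net_lyap_lower al Hal_le (x t)). pose proof (net_lyap_upper be Hbe_ge (x 0)).
  pose proof (exp_pos (g * t)).
  apply (Rmult_le_reg_l al); [exact Hal|].
  replace (al * (be / al * sqnorm (3 * N) (x 0))) with (be * sqnorm (3 * N) (x 0)) by (field; lra).
  cbv beta in *. nra.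
Qed.
End Network.

Theorem theorem1 (N : nat) (adj : nat -> nat -> bool)
  (Ct Lt Rt RL : nat -> R) (Rl : nat -> nat -> R) (k1 k2 k3 : nat -> R) :
  (1 <= N)%nat ->
  simple_graph N adj ->
  connected N adj ->
  (forall i, (i < N)%nat -> 0 < Ct i /\ 0 < Lt i /\ 0 < Rt i /\ 0 < RL i) ->
  (forall i j, adj i j = true -> 0 < Rl i j /\ Rl i j = Rl j i) ->
  (forall i, (i < N)%nat -> k1 i < 1 /\ k2 i < Rt i /\ 0 < k3 i) ->
  asymptotically_stable (3 * N) (FC N adj Ct Lt Rt RL Rl k1 k2 k3).
Proof.
  intros _ [Hsym [Hirr _]] _ Hpos HRl Hk.
  destruct (FC_exp_estimate N adj Ct Lt Rt RL Rl k1 k2 k3 Hirr Hpos HRl Hsym Hk) as (K & g & HK & Hg & Hest).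
  exact (asymptotically_stable_of_exp_estimate _ _ K g HK Hg Hest).
Qed.
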